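(* Let $\mathcal T$ be a theory with signature $\Pi=(\Sigma_0\cup\Sigma,\mathsf{Pred})$, where the symbols of $\Pi_0=(\Sigma_0,\mathsf{Pred})$ are interpreted and those of $\Sigma$ are uninterpreted, and let $C$ be a set of additional constants. Let $\phi$ be a ground $\Pi^C$-formula, let $\Sigma_s\subseteq\Sigma$ be a subset of the uninterpreted function symbols occurring in $\phi$ and $C_s\subseteq C$ a subset of the constants occurring in $\phi$. Let $\Sigma_e$ be the set of function symbols of $\Sigma$ occurring in $\phi$ that are not in $\Sigma_s$, $C_e$ the set of constants of $C$ occurring in $\phi$ that are not in $C_s$, $\Pi_s=(\Sigma_0\cup\Sigma_s,\mathsf{Pred})$, $\Pi_r=(\Sigma_0\cup(\Sigma\setminus\Sigma_e),\mathsf{Pred})$ and $C_r=C\setminus C_e$. Then a ground $\Pi_s^{C_s}$-formula $\psi$ is a $\mathcal T$-general uniform interpolant of $\phi$ with respect to $\Sigma_s\cup C_s$ if and only if: (1) $\mathcal T\models\phi\to\psi$, and (2') for every $\Pi^C$-structure $\mathcal A$ which is a model of $\mathcal T$ with $\mathcal A\models\psi$ there exists a $\Pi^C$-structure $\mathcal B$ which is a model of $\mathcal T$ such that the reduct $\mathcal A_{|\Pi_r^{C_r}}$ embeds into the reduct $\mathcal B_{|\Pi_r^{C_r}}$ and $\mathcal B\models\phi$.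
   Context: For a signature $\Pi$ and a set $C$ of fresh constants, $\Pi^C$ denotes the extension of $\Pi$ by the constants in $C$; $\mathcal A_{|\Pi'}$ denotes the reduct of $\mathcal A$ to a subsignature $\Pi'$. An embedding is an injective homomorphism that also preserves and reflects all predicates. $F\models_{\mathcal T}G$ means every model of $\mathcal T$ that satisfies $F$ satisfies $G$. General uniform interpolant: Let $\mathcal T$ be a theory over $\Pi=(\Sigma_0\cup\Sigma_1,\mathsf{Pred})$ with $\Pi_0=(\Sigma_0,\mathsf{Pred})$ interpreted and $\Sigma_1$ uninterpreted. Let $\phi$ be a quantifier-free $\Pi^C$-formula and $\Sigma_s\subseteq\Sigma_1$, $C_s\subseteq C$ sets of uninterpreted function symbols and constants occurring in $\phi$; let $\Pi_s=(\Sigma_0\cup\Sigma_s,\mathsf{Pred})$. A quantifier-free $\Pi_s^{C_s}$-formula $\psi$ is a $\mathcal T$-general uniform interpolant of $\phi$ w.r.t. $\Sigma_s\cup C_s$ if (1) $\phi\models_{\mathcal T}\psi$, and (2) for every ground formula $\theta$ whose symbols in common with $\phi$ are only interpreted symbols of $\Pi_0$, uninterpreted function symbols in $\Sigma_s$ and constants in $C_s$: if $\phi\models_{\mathcal T}\theta$ then $\psi\models_{\mathcal T}\theta$. *)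

From mathcomp Require Import ssreflect ssrbool ssrnat fintype.


Record sig := Sig {
  fsym : Type;              (* function symbols (constants = arity 0) *)
  fari : fsym -> nat;
  psym : Type;
  pari : psym -> nat }.

Arguments fari {s}.
Arguments pari {s}.

Inductive term (S : sig) : Type :=
| tvar : nat -> term S
| tapp : forall f : fsym S, ('I_(fari f) -> term S) -> term S.

Inductive form (S : sig) : Type :=
| fFalse : form S
| fTrue : form S
| feq : term S -> term S -> form S
| fpred : forall p : psym S, ('I_(pari p) -> term S) -> form S
| fnot : form S -> form S
| fand : form S -> form S -> form S
| forr : form S -> form S -> form S
| fimp : form S -> form S -> form S
| fall : nat -> form S -> form S
| fex : nat -> form S -> form S.

Arguments tvar {S}.
Arguments tapp {S}.
Arguments fFalse {S}.
Arguments fTrue {S}.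
Arguments feq {S}.
Arguments fpred {S}.
Arguments fnot {S}.
Arguments fand {S}.
Arguments forr {S}.
Arguments fimp {S}.
Arguments fall {S}.
Arguments fex {S}.

Record structure (S : sig) := Structure {
  dom :> Type;
  dom_pt : dom;
  funs : forall f : fsym S, ('I_(fari f) -> dom) -> dom;
  preds : forall p : psym S, ('I_(pari p) -> dom) -> Prop }.

Arguments dom {S}.
Arguments dom_pt {S}.
Arguments funs {S}.
Arguments preds {S}.

Set Implicit Arguments.
Unset Strict Implicit.

Section Semantics.
Variables (S : sig) (A : structure S).

Fixpoint eval (e : nat -> A) (t : term S) : A :=
  match t with
  | tvar x => e x
  | tapp f args => funs A f (fun i => eval e (args i))
  end.

Definition upd (e : nat -> A) (x : nat) (a : A) : nat -> A :=
  fun y => if Nat.eqb y x then a else e y.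

Fixpoint sat (e : nat -> A) (F : form S) : Prop :=
  match F with
  | fFalse => False
  | fTrue => True
  | feq t u => eval e t = eval e u
  | fpred p args => preds A p (fun i => eval e (args i))
  | fnot G => ~ sat e G
  | fand G H => sat e G /\ sat e H
  | forr G H => sat e G \/ sat e H
  | fimp G H => sat e G -> sat e H
  | fall x G => forall a : A, sat (upd e x a) G
  | fex x G => exists a : A, sat (upd e x a) G
  end.

Definition holds (F : form S) : Prop := forall e : nat -> A, sat e F.

End Semantics.

Fixpoint gterm (S : sig) (t : term S) : Prop :=
  match t with
  | tvar _ => False
  | tapp f args => forall i, gterm (args i)
  end.

Fixpoint ground (S : sig) (F : form S) : Prop :=
  match F with
  | fFalse | fTrue => True
  | feq t u => gterm t /\ gterm u
  | fpred p args => forall i, gterm (args i)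
  | fnot G => ground G
  | fand G H | forr G H | fimp G H => ground G /\ ground H
  | fall _ _ | fex _ _ => False
  end.

Fixpoint qfree (S : sig) (F : form S) : Prop :=
  match F with
  | fFalse | fTrue | feq _ _ | fpred _ _ => True
  | fnot G => qfree G
  | fand G H | forr G H | fimp G H => qfree G /\ qfree H
  | fall _ _ | fex _ _ => False
  end.

Fixpoint occ_t (S : sig) (g : fsym S) (t : term S) : Prop :=
  match t with
  | tvar _ => False
  | tapp f args => f = g \/ exists i, occ_t g (args i)
  end.

Fixpoint occ (S : sig) (g : fsym S) (F : form S) : Prop :=
  match F with
  | fFalse | fTrue => False
  | feq t u => occ_t g t \/ occ_t g u
  | fpred p args => exists i, occ_t g (args i)
  | fnot G => occ g G
  | fand G H | forr G H | fimp G H => occ g G \/ occ g H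
  | fall _ G | fex _ G => occ g G
  end.

(* F is a formula over the subsignature whose function symbols satisfy P
   (all predicate symbols are allowed). *)
Definition only_syms (S : sig) (P : fsym S -> Prop) (F : form S) : Prop :=
  forall f, occ f F -> P f.

Definition subsig (S : sig) (P : fsym S -> Prop) : sig :=
  {| fsym := {f : fsym S | P f};
     fari := fun f => fari (proj1_sig f);
     psym := psym S;
     pari := pari |}.

Definition reduct (S : sig) (P : fsym S -> Prop) (A : structure S)
  : structure (subsig P) :=
  @Structure (subsig P) (dom A) (dom_pt A)
    (fun f => funs A (proj1_sig f)) (fun p => preds A p).

Definition embedding (S : sig) (A B : structure S) (h : A -> B) : Prop :=
  (forall x y, h x = h y -> x = y) /\
  (forall f (args : 'I_(fari f) -> A),
      h (funs A f args) = funs B f (fun i => h (args i))) /\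
  (forall p (args : 'I_(pari p) -> A),
      preds A p args <-> preds B p (fun i => h (args i))).

Definition embeds (S : sig) (A B : structure S) : Prop :=
  exists h : A -> B, embedding h.

Definition ext (S : sig) (K : Type) (kar : K -> nat) (Q : Type) (qar : Q -> nat)
  : sig :=
  {| fsym := (fsym S + K)%type;
     fari := fun f => match f with inl g => fari g | inr k => kar k end;
     psym := (psym S + Q)%type;
     pari := fun p => match p with inl g => pari g | inr q => qar q end |}.

Section Ext.
Variables (S : sig) (K : Type) (kar : K -> nat) (Q : Type) (qar : Q -> nat).

Fixpoint lift_t (t : term S) : term (ext S kar qar) :=
  match t with
  | tvar x => tvar x
  | tapp f args => @tapp (ext S kar qar) (inl f) (fun i => lift_t (args i))
  end.

Fixpoint lift (F : form S) : form (ext S kar qar) :=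
  match F with
  | fFalse => fFalse
  | fTrue => fTrue
  | feq t u => feq (lift_t t) (lift_t u)
  | fpred p args => @fpred (ext S kar qar) (inl p) (fun i => lift_t (args i))
  | fnot G => fnot (lift G)
  | fand G H => fand (lift G) (lift H)
  | forr G H => forr (lift G) (lift H)
  | fimp G H => fimp (lift G) (lift H)
  | fall x G => fall x (lift G)
  | fex x G => fex x (lift G)
  end.

Definition restrict (A : structure (ext S kar qar)) : structure S :=
  @Structure S (dom A) (dom_pt A)
    (fun f => funs A (inl f)) (fun p => preds A (inl p)).

End Ext.

(* The setting: Pi^C = (Sigma_0 u Sigma u C, Pred).                    *)

Inductive symkind := KInterp | KUnint | KConst .

Definition models (S : sig) (T : form S -> Prop) (A : structure S) : Prop :=
  forall sigma, T sigma -> holds A sigma.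

Definition entails (S : sig) (T : form S -> Prop) (F G : form S) : Prop :=
  forall A : structure S, models T A -> holds A F -> holds A G.

Definition entailsX (S : sig) (T : form S -> Prop) (K : Type) (kar : K -> nat)
  (Q : Type) (qar : Q -> nat) (F : form S) (theta : form (ext S kar qar)) : Prop :=
  forall A : structure (ext S kar qar),
    models T (restrict A) -> holds A (lift kar qar F) -> holds A theta.

Definition symS (S : sig) (kind : fsym S -> symkind) (Ss Cs : fsym S -> Prop)
  (f : fsym S) : Prop :=
  kind f = KInterp \/ (kind f = KUnint /\ Ss f) \/ (kind f = KConst /\ Cs f).

Definition SigmaE (S : sig) (kind : fsym S -> symkind) (phi : form S)
  (Ss : fsym S -> Prop) (f : fsym S) : Prop :=
  kind f = KUnint /\ occ f phi /\ ~ Ss f.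

Definition ConstE (S : sig) (kind : fsym S -> symkind) (phi : form S)
  (Cs : fsym S -> Prop) (f : fsym S) : Prop :=
  kind f = KConst /\ occ f phi /\ ~ Cs f.

Definition symR (S : sig) (kind : fsym S -> symkind) (phi : form S)
  (Ss Cs : fsym S -> Prop) (f : fsym S) : Prop :=
  kind f = KInterp \/ (kind f = KUnint /\ ~ SigmaE kind phi Ss f)
  \/ (kind f = KConst /\ ~ ConstE kind phi Cs f).

(* The formulas theta range over ground formulas in arbitrary extensions
   of the signature Pi^C (by new function symbols K and predicates Q);
   their symbols in common with phi must be interpreted symbols, or in
   Sigma_s, or in C_s. *)
Definition general_uniform_interpolant (S : sig) (kind : fsym S -> symkind)
  (T : form S -> Prop) (phi : form S) (Ss Cs : fsym S -> Prop) (psi : form S)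
  : Prop :=
  qfree psi /\ only_syms (symS kind Ss Cs) psi /\
  entails T phi psi /\
  (forall (K : Type) (kar : K -> nat) (Q : Type) (qar : Q -> nat)
          (theta : form (ext S kar qar)),
      ground theta ->
      (forall f : fsym S, occ (inl f : fsym (ext S kar qar)) theta -> occ f phi ->
                          symS kind Ss Cs f) ->
      entailsX T phi theta -> entailsX T psi theta).

(* (2') => (2): given a model A of T and psi in an extended signature, take B |= phi
   with the Pi_r^{C_r}-reduct of A embedded in that of B, and interpret the new symbols
   of theta on B by pulling back along the embedding. A ground theta whose old symbols
   lie in Pi_r^{C_r} then has the same truth value in A and in B, and B |= theta.
   (2) => (2'): name the elements of A by fresh constants. The negation of any finite
   part of the Pi_r-diagram of A is a theta that A refutes although A |= psi, so by (2)
   phi does not entail it either: T, phi and each finite part of the diagram have a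
   common model. Index these models by the finite parts; their ultraproduct along an
   ultrafilter containing, for each literal, the set of finite parts containing it
   satisfies T and phi by Los's theorem, and also the whole diagram, so the reduct
   of A embeds into it. *)

From Pilot Require Import Defs.
From Stdlib Require Import Classical ClassicalEpsilon FunctionalExtensionality
  ProofIrrelevance PropExtensionality List.
From mathcomp Require Import ssreflect ssrbool eqtype seq fintype.
From mathcomp Require classical_sets filter.

Set Implicit Arguments.
Unset Strict Implicit.

Record ultrafilter (I : Type) (U : (I -> Prop) -> Prop) : Prop := {
  ultraT : U (fun _ => True);
  ultra0 : ~ U (fun _ => False);
  ultraI : forall X Y, U X -> U Y -> U (fun i => X i /\ Y i);
  ultraS : forall X Y : I -> Prop, (forall i, X i -> Y i) -> U X -> U Y;
  ultraC : forall X, U X \/ U (fun i => ~ X i) }.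

Section UltrafilterTheory.
Variables (I : Type) (U : (I -> Prop) -> Prop) (HU : ultrafilter U).

Lemma ultra_all_seq (J : eqType) (s : seq J) (X : J -> I -> Prop) :
  (forall j, U (X j)) -> U (fun i => forall j, j \in s -> X j i).
Proof.
move=> UX; elim: s => [|j s IHs].
  by apply: (ultraS HU) (ultraT HU) => i _ j.
apply: (ultraS HU) (ultraI HU (UX j) IHs) => i [Xj Xs] k.
by rewrite inE => /orP [/eqP ->|/Xs].
Qed.

Lemma ultra_all_ord (n : nat) (X : 'I_n -> I -> Prop) :
  (forall j, U (X j)) -> U (fun i => forall j, X j i).
Proof.
move=> /(ultra_all_seq (ord_enum n)); apply: (ultraS HU) => i Xi j.
by apply: Xi; rewrite mem_ord_enum.
Qed.

Lemma ultraN X : ~ U X <-> U (fun i => ~ X i).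
Proof.
split; first by case: (ultraC HU X).
move=> UnX UX; apply: (ultra0 HU).
by apply: (ultraS HU) (ultraI HU UX UnX) => i [].
Qed.

Lemma ultra_and X Y : U (fun i => X i /\ Y i) <-> U X /\ U Y.
Proof.
split; last by case; apply: (ultraI HU).
by move=> UXY; split; apply: (ultraS HU) UXY => i [].
Qed.

Lemma ultra_or X Y : U (fun i => X i \/ Y i) <-> U X \/ U Y.
Proof.
split; last by case; apply: (ultraS HU) => i; auto.
move=> UXY; case: (classic (U X)) => [|/ultraN UnX]; first by left.
by right; apply: (ultraS HU) (ultraI HU UXY UnX) => i [[]].
Qed.

Lemma ultra_imp X Y : U (fun i => X i -> Y i) <-> (U X -> U Y).
Proof.
split.
  by move=> UXY UX; apply: (ultraS HU) (ultraI HU UXY UX) => i [/[apply]].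
move=> UXY; case: (classic (U X)) => [/UXY|/ultraN]; apply: (ultraS HU) => i; auto.
by move=> nXi /nXi.
Qed.

End UltrafilterTheory.

Lemma ultrafilter_cofinal (X : Type) :
  exists U, ultrafilter U /\ forall x : X, U (fun L => In x L).
Proof.
pose F (P : list X -> Prop) := exists L0, forall L, incl L0 L -> P L.
have FF : filter.ProperFilter (F : classical_sets.set_system (list X)).
  split; first by case=> L0 /(_ L0 (incl_refl L0)).
  split.
  - by exists nil.
  - move=> P Q [L0 HP] [L1 HQ]; exists (L0 ++ L1) => L /incl_app_inv [/HP ? /HQ ?].
    by split.
  - by move=> P Q PQ [L0 HP]; exists L0 => L /HP /PQ.
have [G [GU FG]] := filter.ultraFilterLemma FF.
exists G; split.
  split.
  - exact: filter.filterT.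
  - exact: (filter.filter_not_empty G).
  - by move=> P Q; apply: filter.filterI.
  - by move=> P Q; apply: filter.filterS.
  - by move=> P; apply: filter.in_ultra_setVsetC.
by move=> x; apply: FG; exists (x :: nil) => L /(_ x (in_eq x nil)).
Qed.

Fixpoint term_nested_ind (S : sig) (P : term S -> Prop)
  (Hv : forall x, P (tvar x))
  (Ha : forall f args, (forall i, P (args i)) -> P (tapp f args)) (t : term S) : P t :=
  match t with
  | tvar x => Hv x
  | tapp f args => Ha f args (fun i => term_nested_ind Hv Ha (args i))
  end.

Lemma structure_eta (S : sig) (A : structure S) :
  @Structure S (dom A) (dom_pt A) (funs A) (preds A) = A.
Proof. by case: A. Qed.

Section Ultraproduct.
Variables (S : sig) (I : Type) (U : (I -> Prop) -> Prop) (HU : ultrafilter U)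
  (B : I -> structure S).

Definition uprod := forall i, dom (B i).
Definition uequiv (x y : uprod) := U (fun i => x i = y i).
Definition uquot := {X : uprod -> Prop | exists x, X = uequiv x}.
Definition ucls (x : uprod) : uquot := exist _ (uequiv x) (ex_intro _ x Logic.eq_refl).
Definition urep (q : uquot) : uprod :=
  proj1_sig (constructive_indefinite_description _ (proj2_sig q)).

Lemma uquot_eq (p q : uquot) : proj1_sig p = proj1_sig q -> p = q.
Proof. by case: p q => [X HX] [Y HY] /= XY; subst Y; f_equal; apply: proof_irrelevance. Qed.

Lemma urepK q : ucls (urep q) = q.
Proof.
apply: uquot_eq; rewrite /= /urep.
by case: (constructive_indefinite_description _ _).
Qed.

Lemma uequiv_refl x : uequiv x x.
Proof. exact: (ultraS HU) (ultraT HU). Qed.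

Lemma uequiv_sym x y : uequiv x y -> uequiv y x.
Proof. exact: (ultraS HU). Qed.

Lemma uequiv_trans x y z : uequiv x y -> uequiv y z -> uequiv x z.
Proof. by move=> xy yz; apply: (ultraS HU) (ultraI HU xy yz) => i [-> ->]. Qed.

Lemma ucls_eq x y : ucls x = ucls y <-> uequiv x y.
Proof.
split => xy.
  by have : proj1_sig (ucls x) y by rewrite xy; exact: uequiv_refl.
apply: uquot_eq; apply: functional_extensionality => z; apply: propositional_extensionality.
by split; [apply: uequiv_trans (uequiv_sym xy) | apply: uequiv_trans xy].
Qed.

Lemma uclsK x : uequiv (urep (ucls x)) x.
Proof. by apply/ucls_eq; rewrite urepK. Qed.

Definition ultraproduct : structure S :=
  @Structure S uquot (ucls (fun i => dom_pt (B i)))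
    (fun f args => ucls (fun i => funs (B i) f (fun j => urep (args j) i)))
    (fun p args => U (fun i => preds (B i) p (fun j => urep (args j) i))).

Lemma ultra_urep_ucls n (v : 'I_n -> uprod) :
  U (fun i => (fun j => urep (ucls (v j)) i) = (fun j => v j i)).
Proof.
apply: (ultraS HU) (ultra_all_ord HU (fun j => uclsK (v j))) => i vi.
exact: functional_extensionality.
Qed.

Lemma ultraproduct_funs f (v : 'I_(fari f) -> uprod) :
  funs ultraproduct f (fun j => ucls (v j)) = ucls (fun i => funs (B i) f (fun j => v j i)).
Proof. by apply/ucls_eq; apply: (ultraS HU) (ultra_urep_ucls v) => i /= ->. Qed.

Lemma ultraproduct_preds p (v : 'I_(pari p) -> uprod) :
  preds ultraproduct p (fun j => ucls (v j)) <-> U (fun i => preds (B i) p (fun j => v j i)).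
Proof.
have UE := ultra_urep_ucls v.
split => /= Hp; apply: (ultraS HU) (ultraI HU Hp UE) => i [Hi E].
  by rewrite -E.
by rewrite E.
Qed.

Lemma eval_ultraproduct (e : nat -> uprod) t :
  eval (A:=ultraproduct) (fun k => ucls (e k)) t = ucls (fun i => eval (A:=B i) (fun k => e k i) t).
Proof.
elim/term_nested_ind: t => [x|f args IH] //.
by rewrite -ultraproduct_funs -(functional_extensionality _ _ IH).
Qed.

Definition upd_prod (e : nat -> uprod) x (y : uprod) : nat -> uprod :=
  fun k => if Nat.eqb k x then y else e k.

Lemma upd_ucls e x y :
  upd (A:=ultraproduct) (fun k => ucls (e k)) x (ucls y) = (fun k => ucls (upd_prod e x y k)).
Proof. by apply: functional_extensionality => k; rewrite /upd /upd_prod; case: Nat.eqb. Qed.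

Lemma upd_prod_at e x y i :
  (fun k => upd_prod e x y k i) = upd (A:=B i) (fun k => e k i) x (y i).
Proof. by apply: functional_extensionality => k; rewrite /upd /upd_prod; case: Nat.eqb. Qed.

Lemma ultra_exists_prod (P : forall i, dom (B i) -> Prop) :
  U (fun i => exists a, P i a) -> exists y : uprod, U (fun i => P i (y i)).
Proof.
move=> UP; exists (fun i => epsilon (inhabits (dom_pt (B i))) (P i)).
by apply: (ultraS HU) UP => i; apply: epsilon_spec.
Qed.

Theorem sat_ultraproduct (F : form S) (e : nat -> uprod) :
  sat (A:=ultraproduct) (fun k => ucls (e k)) F <-> U (fun i => sat (A:=B i) (fun k => e k i) F).
Proof.
elim: F e => [| |t u|p args|G IH|G IHG H IHH|G IHG H IHH|G IHG H IHH|x G IH|x G IH] e; cbn [sat].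
- by split => //; apply: (ultra0 HU).
- by split => // _; apply: (ultraT HU).
- by rewrite !eval_ultraproduct ucls_eq.
- rewrite (functional_extensionality _ _ (fun j => eval_ultraproduct e (args j))).
  exact: ultraproduct_preds.
- by rewrite IH ultraN.
- by rewrite IHG IHH ultra_and.
- by rewrite IHG IHH ultra_or.
- by rewrite IHG IHH ultra_imp.
- split => [Hall|UG a].
    apply: NNPP => /(ultraN HU) UnG.
    have : U (fun i => exists a, ~ sat (A:=B i) (upd (A:=B i) (fun k => e k i) x a) G).
      by apply: (ultraS HU) UnG => i /not_all_ex_not.
    case/ultra_exists_prod => y Uy.
    have := Hall (ucls y); rewrite upd_ucls IH => UG.
    apply: (ultra0 HU); apply: (ultraS HU) (ultraI HU UG Uy) => i [].
    by rewrite upd_prod_at.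
  rewrite -(urepK a) upd_ucls IH.
  by apply: (ultraS HU) UG => i; rewrite upd_prod_at.
- split => [[a]|UG].
    rewrite -(urepK a) upd_ucls IH; apply: (ultraS HU) => i.
    by rewrite upd_prod_at; exists (urep a i).
  have [y Uy] := ultra_exists_prod UG.
  exists (ucls y); rewrite upd_ucls IH.
  by apply: (ultraS HU) Uy => i; rewrite upd_prod_at.
Qed.

Corollary holds_ultraproduct F : (forall i, holds (B i) F) -> holds ultraproduct F.
Proof.
move=> HF e; rewrite -(functional_extensionality _ _ (fun k => urepK (e k))).
by apply/sat_ultraproduct; apply: (ultraS HU) (ultraT HU) => i _; apply: HF.
Qed.

End Ultraproduct.

Section Lift.
Variables (S : sig) (K : Type) (kar : K -> nat) (Q : Type) (qar : Q -> nat)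
  (A : structure (ext S kar qar)).

Lemma eval_lift (e : nat -> dom A) t :
  eval (A:=restrict A) e t = eval (A:=A) e (lift_t kar qar t).
Proof.
elim/term_nested_ind: t => [x|f args IH] //=.
by f_equal; apply: functional_extensionality.
Qed.

Lemma sat_lift F (e : nat -> dom A) :
  sat (A:=restrict A) e F <-> sat (A:=A) e (Defs.lift kar qar F).
Proof.
elim: F e => [| |t u|p args|G IH|G IHG H IHH|G IHG H IHH|G IHG H IHH|x G IH|x G IH] e /=.
1,2: by [].
- by rewrite !eval_lift.
- by rewrite (functional_extensionality _ _ (fun i => eval_lift e (args i))); split.
- by rewrite IH.
- by rewrite IHG IHH.
- by rewrite IHG IHH.
- by rewrite IHG IHH.
- by split => HG a; apply/IH; apply: HG.
- by split => -[a HG]; exists a; apply/IH.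
Qed.

Lemma holds_lift F : holds (restrict A) F <-> holds A (Defs.lift kar qar F).
Proof. by split => HF e; apply/sat_lift. Qed.

End Lift.

Section Transport.
Variables (S : sig) (R : fsym S -> Prop) (K : Type) (kar : K -> nat) (Q : Type)
  (qar : Q -> nat) (A : structure (ext S kar qar)) (B : structure S) (h : dom A -> dom B).
Hypothesis h_emb : embedding (A:=reduct R (restrict A)) (B:=reduct R B) h.

Definition preim n (args : 'I_n -> dom B) : 'I_n -> dom A :=
  epsilon (inhabits (fun _ => dom_pt A)) (fun a => forall i, args i = h (a i)).

Lemma preimK n (a : 'I_n -> dom A) : preim (fun i => h (a i)) = a.
Proof.
case: h_emb => h_inj _; apply: functional_extensionality => i; apply: h_inj.
by rewrite -(epsilon_spec _ (fun b => forall i, h (a i) = h (b i))) //; exists a.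
Qed.

(* The symbols of [ext S kar qar] outside [S] are interpreted on [B] by pulling
   their arguments back along [h]; off the image of [h] the choice is irrelevant. *)
Definition transport : structure (ext S kar qar) :=
  @Structure (ext S kar qar) (dom B) (dom_pt B)
    (fun f => match f as f0 return ('I_(@fari (ext S kar qar) f0) -> dom B) -> dom B with
       | inl g => funs B g
       | inr k => fun args => h (funs A (inr k) (preim args))
       end)
    (fun p => match p as p0 return ('I_(@pari (ext S kar qar) p0) -> dom B) -> Prop with
       | inl g => preds B g
       | inr q => fun args => preds A (inr q) (preim args)
       end).

Lemma restrict_transport : restrict transport = B.
Proof. exact: structure_eta. Qed.

Lemma eval_transport (t : term (ext S kar qar)) :
  gterm t -> (forall f, occ_t (inl f : fsym (ext S kar qar)) t -> R f) ->
  forall e e', eval (A:=transport) e t = h (eval (A:=A) e' t).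
Proof.
case: h_emb => _ [h_funs _].
elim/term_nested_ind: t => [//|f args IH] /= Hg HR e e'.
have -> : (fun i => eval (A:=transport) e (args i)) = (fun i => h (eval (A:=A) e' (args i))).
  apply: functional_extensionality => i; apply: IH => [|g Hgi]; first exact: Hg.
  by apply: HR; right; exists i.
case: f args {IH Hg} HR => [g|k] args HR /=; last by rewrite preimK.
by have := h_funs (exist _ g (HR g (or_introl Logic.eq_refl))) (fun i => eval e' (args i)) => /= ->.
Qed.

Lemma sat_transport (F : form (ext S kar qar)) :
  ground F -> (forall f, occ (inl f : fsym (ext S kar qar)) F -> R f) ->
  forall e e', sat (A:=transport) e F <-> sat (A:=A) e' F.
Proof.
case: h_emb => h_inj [_ h_preds].
elim: F => [| |t u|p args|G IH|G IHG H IHH|G IHG H IHH|G IHG H IHH|//|//] /= Hg HR e e'.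
6-8: case: Hg => HgG HgH;
  by rewrite (IHG HgG (fun f Hf => HR f (or_introl Hf)) e e')
             (IHH HgH (fun f Hf => HR f (or_intror Hf)) e e').
1,2: by [].
- case: Hg => Ht Hu.
  rewrite (eval_transport Ht (fun f Hf => HR f (or_introl Hf)) e e').
  rewrite (eval_transport Hu (fun f Hf => HR f (or_intror Hf)) e e').
  by split => [/h_inj|->].
- have -> : (fun i => eval (A:=transport) e (args i)) = (fun i => h (eval (A:=A) e' (args i))).
    apply: functional_extensionality => i; apply: eval_transport => [|f Hf]; first exact: Hg.
    by apply: HR; exists i.
  case: p args {Hg HR} => [g|q] args /=; last by rewrite preimK.
  by have := h_preds g (fun i => eval e' (args i)) => /= ->.
- by rewrite (IH Hg HR e e').
Qed.

End Transport.

Lemma entailsX_of_embedding_property (S : sig) (R : fsym S -> Prop) (T : form S -> Prop)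
    (phi psi : form S) :
  (forall A : structure S, models T A -> holds A psi ->
     exists B : structure S, models T B /\ embeds (reduct R A) (reduct R B) /\ holds B phi) ->
  forall K (kar : K -> nat) Q (qar : Q -> nat) (theta : form (ext S kar qar)),
    ground theta -> (forall f, occ (inl f : fsym (ext S kar qar)) theta -> R f) ->
    entailsX T phi theta -> entailsX T psi theta.
Proof.
move=> embed K kar Q qar theta Hg HR phi_theta A T_A psi_A e.
have [B [T_B [[h h_emb] phi_B]]] := embed _ T_A (proj2 (holds_lift A psi) psi_A).
apply/(sat_transport h_emb Hg HR (fun _ => dom_pt B) e).
apply: phi_theta; first by rewrite restrict_transport.
by apply/holds_lift; rewrite restrict_transport.
Qed.

Section Diagram.
Variables (S : sig) (R : fsym S -> Prop) (A : structure S).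

(* Literals of the diagram of the [R]-reduct of [A], over names for the elements. *)
Inductive literal : Type :=
| LFun (f : fsym S) (Rf : R f) (args : 'I_(fari f) -> dom A)
| LNeq (a b : dom A)
| LPred (p : psym S) (args : 'I_(pari p) -> dom A)
| LNPred (p : psym S) (args : 'I_(pari p) -> dom A).

Definition literal_true (l : literal) : Prop :=
  match l with
  | LFun _ _ _ => True
  | LNeq a b => a <> b
  | LPred p args => preds A p args
  | LNPred p args => ~ preds A p args
  end.

Definition diagram := {l : literal | literal_true l}.

Definition no_preds (q : Empty_set) : nat := match q with end.

Definition named_sig := ext S (fun _ : dom A => 0) no_preds.

Definition cst (a : dom A) : term named_sig := @tapp named_sig (inr a) (fun _ => tvar 0).

Definition literal_form (l : literal) : form named_sig :=
  match l with
  | LFun f _ args => feq (@tapp named_sig (inl f) (fun j => cst (args j))) (cst (funs A f args))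
  | LNeq a b => fnot (feq (cst a) (cst b))
  | LPred p args => @fpred named_sig (inl p) (fun j => cst (args j))
  | LNPred p args => fnot (@fpred named_sig (inl p) (fun j => cst (args j)))
  end.

Definition diagram_conj (L : list diagram) : form named_sig :=
  fold_right (fun l F => fand (literal_form (proj1_sig l)) F) fTrue L.

Lemma ground_diagram_conj L : ground (diagram_conj L).
Proof.
elim: L => [|[l _] L IHL] //=; split => //.
by case: l => /= *; do ?split => *; match goal with j : 'I_0 |- _ => case: j end.
Qed.

Lemma occ_diagram_conj L f : occ (inl f : fsym named_sig) (diagram_conj L) -> R f.
Proof.
have occ_cst a : ~ occ_t (inl f : fsym named_sig) (cst a) by case=> [|[[]]].
elim: L => [|[l _] L IHL] //= [|/IHL //].
case: l => [g Rg args|a b|p args|p args] /=.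
- by case=> [[[<-]|[j /occ_cst]]|/occ_cst].
- by case=> /occ_cst.
- by case=> j /occ_cst.
- by case=> j /occ_cst.
Qed.

Definition named : structure named_sig :=
  @Structure named_sig (dom A) (dom_pt A)
    (fun f => match f as f0 return ('I_(@fari named_sig f0) -> dom A) -> dom A with
       | inl g => funs A g
       | inr a => fun _ => a
       end)
    (fun p => match p as p0 return ('I_(@pari named_sig p0) -> dom A) -> Prop with
       | inl g => preds A g
       | inr q => match q with end
       end).

Lemma restrict_named : restrict named = A.
Proof. exact: structure_eta. Qed.

Lemma sat_named_diagram_conj L e : sat (A:=named) e (diagram_conj L).
Proof. by elim: L => [|[[] ? ? ?] L IHL] //=. Qed.

Definition cval (B : structure named_sig) (a : dom A) : dom B :=
  funs B (inr a) (fun _ => dom_pt B).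

Definition literal_sem (B : structure named_sig) (l : literal) : Prop :=
  match l with
  | LFun f _ args => funs B (inl f) (fun j => cval B (args j)) = cval B (funs A f args)
  | LNeq a b => cval B a <> cval B b
  | LPred p args => preds B (inl p) (fun j => cval B (args j))
  | LNPred p args => ~ preds B (inl p) (fun j => cval B (args j))
  end.

Lemma sat_literal_form (B : structure named_sig) e l :
  sat (A:=B) e (literal_form l) <-> literal_sem B l.
Proof.
have args0 : (fun _ : 'I_0 => e 0) = (fun _ => dom_pt B).
  by apply: functional_extensionality; case.
by case: l => /= *; rewrite args0.
Qed.

Lemma sat_diagram_conj (B : structure named_sig) e L :
  sat (A:=B) e (diagram_conj L) -> forall l, In l L -> literal_sem B (proj1_sig l).
Proof.
elim: L => [_ l []|l' L IHL /= [Hl' HL] l [<-|Hl]]; last exact: IHL HL l Hl.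
exact: proj1 (sat_literal_form e _) Hl'.
Qed.


Lemma embeds_ultraproduct_of_diagram (J : Type) (U : (J -> Prop) -> Prop)
    (HU : ultrafilter U) (Bs : J -> structure named_sig) :
  (forall l : diagram, U (fun j => literal_sem (Bs j) (proj1_sig l))) ->
  embeds (reduct R A) (reduct R (ultraproduct U (fun j => restrict (Bs j)))).
Proof.
move=> U_diag.
exists (fun a => ucls U (fun j => cval (Bs j) a)); split; [|split].
- move=> a b /(ucls_eq HU) Uab; apply: NNPP => ab; apply: (ultra0 HU).
  by apply: (ultraS HU) (ultraI HU Uab (U_diag (exist _ (LNeq a b) ab))) => j [].
- case=> f Rf args.
  have /= -> := ultraproduct_funs HU (B:=fun j => restrict (Bs j)) (f:=f)
    (fun k j => cval (Bs j) (args k)).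
  apply/(ucls_eq HU).
  by apply: (ultraS HU) (U_diag (exist _ (LFun Rf args) I)) => j /= ->.
- move=> p args.
  have /= -> := ultraproduct_preds HU (B:=fun j => restrict (Bs j)) (p:=p)
    (fun k j => cval (Bs j) (args k)).
  split => [Hp|Up].
    exact: U_diag (exist _ (LPred args) Hp).
  apply: NNPP => nHp; apply: (ultra0 HU).
  by apply: (ultraS HU) (ultraI HU Up (U_diag (exist _ (LNPred args) nHp))) => j [].
Qed.

End Diagram.

Section Compactness.
Variables (S : sig) (R : fsym S -> Prop) (T : form S -> Prop) (phi psi : form S)
  (A : structure S).
Hypothesis transfer : forall theta : form (named_sig A), ground theta ->
  (forall f, occ (inl f : fsym (named_sig A)) theta -> R f) ->
  entailsX T phi theta -> entailsX T psi theta.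
Hypotheses (T_A : models T A) (psi_A : holds A psi).

(* Otherwise [phi] entails the negated conjunction, hence so does [psi]; but [A]
   satisfies both [psi] and the conjunction. *)
Lemma diagram_finitely_satisfiable (L : list (diagram R A)) :
  exists B : structure (named_sig A),
    models T (restrict B) /\ holds B (Defs.lift _ _ phi) /\
    forall l, In l L -> literal_sem B (proj1_sig l).
Proof.
apply: NNPP => noB.
have phi_theta : entailsX T phi (fnot (diagram_conj L)).
  move=> B T_B phi_B e conj_B; apply: noB; exists B; do 2!split => //.
  exact: sat_diagram_conj conj_B.
have psi_named : holds (named A) (Defs.lift _ _ psi).
  by apply/holds_lift; rewrite restrict_named.
have := @transfer (fnot (diagram_conj L)) (ground_diagram_conj L)
  (@occ_diagram_conj _ _ _ L) phi_theta (named A).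
rewrite restrict_named => /(_ T_A psi_named (fun _ => dom_pt A)).
by apply; apply: sat_named_diagram_conj.
Qed.

Lemma embedding_property_of_entailsX :
  exists B : structure S, models T B /\ embeds (reduct R A) (reduct R B) /\ holds B phi.
Proof.
have [Bs HBs] := choice _ diagram_finitely_satisfiable.
have [U [HU U_In]] := ultrafilter_cofinal (diagram R A).
exists (ultraproduct U (fun L => restrict (Bs L))); split; [|split].
- move=> sigma T_sigma; apply: (holds_ultraproduct HU) => L.
  by case: (HBs L) => T_B _; apply: T_B.
- apply: (embeds_ultraproduct_of_diagram HU) => l.
  by apply: (ultraS HU) (U_In l) => L; case: (HBs L) => _ [_]; apply.
- apply: (holds_ultraproduct HU) => L.
  by case: (HBs L) => _ [phi_B _]; apply/holds_lift.
Qed.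

End Compactness.

Lemma ground_qfree (S : sig) (F : form S) : ground F -> qfree F.
Proof. by elim: F => //= *; tauto. Qed.

Lemma symR_iff (S : sig) (kind : fsym S -> symkind) (phi : form S) (Ss Cs : fsym S -> Prop)
    (f : fsym S) :
  symR kind phi Ss Cs f <-> (occ f phi -> symS kind Ss Cs f).
Proof.
rewrite /symR /symS /SigmaE /ConstE; split.
  case=> [Hk|[[Hk HS]|[Hk HS]]] occ_f; [by left|right; left|right; right];
  by split => //; apply: NNPP => nS; apply: HS (conj Hk (conj occ_f nS)).
case: (classic (occ f phi)) => [occ_f /(_ occ_f)|nocc _].
  by case=> [->|[[-> HS]|[-> HS]]]; [left|right; left|right; right]; split => // -[_ []].
by case: (kind f); [left|right; left|right; right]; split => // -[_ []].
Qed.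

Theorem mainTheorem1 (S : sig) (kind : fsym S -> symkind)
  (kind_const : forall f, kind f = KConst -> fari f = 0)
  (T : form S -> Prop)
  (T_over_Pi : forall sigma, T sigma -> forall f, occ f sigma -> kind f <> KConst)
  (phi : form S) (phi_ground : ground phi)
  (Ss Cs : fsym S -> Prop)
  (Ss_sub : forall f, Ss f -> kind f = KUnint /\ occ f phi)
  (Cs_sub : forall f, Cs f -> kind f = KConst /\ occ f phi)
  (psi : form S) (psi_ground : ground psi)
  (psi_sig : only_syms (symS kind Ss Cs) psi) :
  general_uniform_interpolant kind T phi Ss Cs psi <->
  (entails T phi psi /\
   forall A : structure S, models T A -> holds A psi ->
     exists B : structure S, models T B /\
       embeds (reduct (symR kind phi Ss Cs) A) (reduct (symR kind phi Ss Cs) B) /\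
       holds B phi).
Proof.
split.
- case=> _ [_ [phi_psi interp]]; split => // A T_A psi_A.
  apply: embedding_property_of_entailsX T_A psi_A => theta Hg HR.
  by apply: interp Hg _ => f /HR /symR_iff.
- case=> phi_psi embed; split; first exact: ground_qfree.
  do 2!split => //; move=> K kar Q qar theta Hg HS.
  apply: (entailsX_of_embedding_property embed) Hg _ => f occ_f.
  by apply/symR_iff; apply: HS.
Qed.
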